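(* Let $g(t)$, $t\in[0,T)$, be the maximal Ricci flow solution on $S^1\times S^3$ of the form $g(t)=\phi^2dz^2+a^2\omega^1\otimes\omega^1+b^2\omega^2\otimes\omega^2+c^2\omega^3\otimes\omega^3$ starting from initial data with $0<a\le b\le c$, and let $\hat c(t)=\max_s c(s,t)$. Then the singular time satisfies $T\le \frac{\hat c(0)^2}{4}$.
   Context: $S^3=SU(2)$ carries a global left-invariant frame $E_1,E_2,E_3$ with $[E_i,E_j]=-2\epsilon_{ijk}E_k$ and dual coframe $\omega^i$; $z\in S^1=[0,2\pi)$, $\phi,a,b,c$ positive smooth $2\pi$-periodic functions; $s$ is the arclength coordinate $ds=\phi\,dz$. The Ricci flow $\partial_tg=-2\mathrm{Ric}(g)$ preserves this form. *)

From Stdlib Require Import Reals Lra.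
From Coquelicot Require Import Coquelicot.
Open Scope R_scope.

(* A cohomogeneity-one metric on S^1 x S^3 along the flow is encoded by four
   functions (z,t) |-> phi, a, b, c, 2*PI-periodic in z.  *)

Definition pz (f : R -> R -> R) : R -> R -> R :=
  fun z t => Derive (fun x => f x t) z.
Definition pt (f : R -> R -> R) : R -> R -> R :=
  fun z t => Derive (fun s => f z s) t.
(* arclength derivative d/ds = (1/phi) d/dz *)
Definition ps (phi f : R -> R -> R) : R -> R -> R :=
  fun z t => pz f z t / phi z t.

Definition cont_on (T : R) (g : R -> R -> R) : Prop :=
  forall z t, 0 <= t < T ->
    filterlim (fun p : R * R => g (fst p) (snd p))
      (within (fun p : R * R => 0 <= snd p < T) (locally (z, t)))
      (locally (g z t)).

Definition smooth_upto (T : R) (f : R -> R -> R) : Prop :=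
  cont_on T f /\
  exists S : (R -> R -> R) -> Prop, S f /\
    forall g, S g ->
      (forall z t, 0 < t < T ->
          ex_derive (fun x => g x t) z /\ ex_derive (fun s => g z s) t) /\
      (exists h, cont_on T h /\ forall z t, 0 < t < T -> h z t = g z t) /\
      S (pz g) /\ S (pt g).

Definition periodic2pi (f : R -> R -> R) : Prop :=
  forall z t, f (z + 2 * PI) t = f z t.

(* Ricci flow  d/dt g = -2 Ric(g)  for
     g = phi^2 dz^2 + a^2 w1^2 + b^2 w2^2 + c^2 w3^2,
   [E_i,E_j] = -2 eps_ijk E_k, written with the arclength derivative. *)
Definition ricci_flow_eqs (phi a b c : R -> R -> R) (z t : R) : Prop :=
  let as_ := ps phi a in let bs := ps phi b in let cs := ps phi c in
  let ass := ps phi as_ in let bss := ps phi bs in let css := ps phi cs in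
  let A := a z t in let B := b z t in let C := c z t in
  pt a z t = ass z t + as_ z t * (bs z t / B + cs z t / C)
             - 2 * (A ^ 4 - (B ^ 2 - C ^ 2) ^ 2) / (A * B ^ 2 * C ^ 2) /\
  pt b z t = bss z t + bs z t * (as_ z t / A + cs z t / C)
             - 2 * (B ^ 4 - (A ^ 2 - C ^ 2) ^ 2) / (A ^ 2 * B * C ^ 2) /\
  pt c z t = css z t + cs z t * (as_ z t / A + bs z t / B)
             - 2 * (C ^ 4 - (A ^ 2 - B ^ 2) ^ 2) / (A ^ 2 * B ^ 2 * C) /\
  pt phi z t = phi z t * (ass z t / A + bss z t / B + css z t / C).

Definition RF_solution (T : R) (phi a b c : R -> R -> R) : Prop :=
  0 < T /\
  smooth_upto T phi /\ smooth_upto T a /\ smooth_upto T b /\ smooth_upto T c /\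
  periodic2pi phi /\ periodic2pi a /\ periodic2pi b /\ periodic2pi c /\
  (forall z t, 0 <= t < T -> 0 < phi z t /\ 0 < a z t /\ 0 < b z t /\ 0 < c z t) /\
  (forall z t, 0 < t < T -> ricci_flow_eqs phi a b c z t).

From Stdlib Require Import Reals Lra Classical ClassicalEpsilon.
From Coquelicot Require Import Coquelicot.
Open Scope R_scope.

(* Where the largest factor u
   attains its spatial maximum, u_s = 0, u_ss <= 0 and the reaction term
   -2 (u^4 - (v^2 - w^2)^2) / (u v^2 w^2) is at most -2/u, so (u^2)_t <= -4.
   Hence for every L < 4 the bound max(a,b,c)^2 + L t < K, true at t = 0, is
   never reached for the first time and persists on [0,T).  The squares being
   positive, T <= K/L; letting L -> 4 and K -> chat(0)^2 (which bounds all
   three factors initially since a <= b <= c) gives T <= chat(0)^2/4. *)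

Lemma derivable_pt_lim_left_max_ge0 f x l d :
  derivable_pt_lim f x l -> 0 < d ->
  (forall y, x - d < y < x -> f y <= f x) -> 0 <= l.
Proof.
  intros Hd Hdpos Hle. apply Rnot_lt_le; intro Hl.
  destruct (Hd (- l / 2) ltac:(lra)) as [del Hdel].
  set (h := - Rmin d del / 2).
  assert (Hm : 0 < Rmin d del) by (apply Rmin_glb_lt; [lra | apply cond_pos]).
  assert (Hm1 := Rmin_l d del). assert (Hm2 := Rmin_r d del).
  assert (Hh : h <> 0) by (unfold h; lra).
  assert (Hha : Rabs h < del) by (unfold h; rewrite Rabs_left; lra).
  specialize (Hdel h Hh Hha).
  specialize (Hle (x + h) ltac:(unfold h; lra)).
  set (q := (f (x + h) - f x) / h) in *.
  assert (Hq : f (x + h) - f x = q * h) by (unfold q; field; auto).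
  apply Rabs_def2 in Hdel. assert (h < 0) by (unfold h; lra). nra.
Qed.

Lemma Derive_eq0_at_max f x :
  ex_derive f x -> (forall y, f y <= f x) -> Derive f x = 0.
Proof.
  intros Hf Hmax.
  rewrite <- (Derive_Reals f x (ex_derive_Reals_0 f x Hf)).
  apply (deriv_maximum f (x - 1) (x + 1)); [lra | lra |].
  intros y _ _. apply Hmax.
Qed.

Lemma Derive2_le0_at_max g z :
  (forall x, ex_derive g x) -> ex_derive (Derive g) z ->
  (forall x, g x <= g z) -> Derive (Derive g) z <= 0.
Proof.
  intros Hg Hg2 Hmax.
  assert (H0 : Derive g z = 0) by (apply Derive_eq0_at_max; auto).
  pose proof (proj1 (is_derive_Reals _ _ _) (Derive_correct _ _ Hg2)) as H.
  set (L := Derive (Derive g) z) in *.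
  apply Rnot_lt_le; intro HL.
  destruct (H (L / 2) ltac:(lra)) as [del Hdel].
  (* g' > 0 just right of z, so g increases there, contradicting the maximum *)
  assert (Hpos : forall c, z < c < z + del -> 0 < Derive g c).
  { intros c Hc. specialize (Hdel (c - z) ltac:(lra) ltac:(rewrite Rabs_right; lra)).
    replace (z + (c - z)) with c in Hdel by ring. rewrite H0 in Hdel.
    apply Rabs_def2 in Hdel.
    set (q := (Derive g c - 0) / (c - z)) in *.
    assert (Derive g c = q * (c - z)) by (unfold q; field; lra). nra. }
  pose proof (cond_pos del).
  destruct (MVT_cor2 g (Derive g) z (z + del / 2) ltac:(lra)) as [c [Hc1 Hc2]].
  { intros c _. apply is_derive_Reals, Derive_correct, Hg. }
  specialize (Hpos c ltac:(lra)). specialize (Hmax (z + del / 2)). nra.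
Qed.

Lemma continuous_le_of_lt_left h t K :
  continuous h t -> 0 < t -> (forall s, 0 <= s < t -> h s < K) -> h t <= K.
Proof.
  intros Hc Ht Hlt. apply Rnot_lt_le; intro Hgt.
  destruct (Hc _ (open_gt K _ Hgt)) as [eps Heps].
  set (s := t - Rmin t eps / 2).
  assert (Hm : 0 < Rmin t eps) by (apply Rmin_glb_lt; [lra | apply cond_pos]).
  assert (Hm1 := Rmin_l t eps). assert (Hm2 := Rmin_r t eps).
  assert (Hs : K < h s).
  { apply Heps. change (Rabs (s - t) < eps). rewrite Rabs_left; unfold s; lra. }
  specialize (Hlt s ltac:(unfold s; lra)). lra.
Qed.

Lemma left_max_sq_add_lin (f : R -> R) (t L d : R) :
  ex_derive f t -> 0 < d ->
  (forall s, t - d < s < t -> f s ^ 2 + L * s <= f t ^ 2 + L * t) ->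
  - L <= 2 * f t * Derive f t.
Proof.
  intros Hf Hd Hleft.
  assert (Hder : is_derive (fun s => f s ^ 2 + L * s) t (2 * f t * Derive f t + L)).
  { auto_derive; [exact Hf |]. change (fun x : R => f x) with f. ring. }
  apply is_derive_Reals in Hder.
  pose proof (derivable_pt_lim_left_max_ge0 _ _ _ d Hder Hd Hleft). lra.
Qed.

Lemma ricci_reaction_ge U V W :
  0 < V -> 0 < W -> V <= U -> W <= U ->
  2 / U <= 2 * (U ^ 4 - (V ^ 2 - W ^ 2) ^ 2) / (U * V ^ 2 * W ^ 2).
Proof.
  intros HV HW HVU HWU.
  assert (HU : 0 < U) by lra.
  assert (Hk : V ^ 2 * W ^ 2 <= U ^ 4 - (V ^ 2 - W ^ 2) ^ 2).
  { assert (HV2 : V ^ 2 <= U ^ 2) by nra. assert (HW2 : W ^ 2 <= U ^ 2) by nra.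
    assert (U ^ 4 = U ^ 2 * U ^ 2) by ring.
    destruct (Rle_or_lt (V ^ 2) (W ^ 2)); nra. }
  assert (0 < U * V ^ 2 * W ^ 2) by (apply Rmult_lt_0_compat; [apply Rmult_lt_0_compat|]; nra).
  replace (2 / U) with (2 * (V ^ 2 * W ^ 2) / (U * V ^ 2 * W ^ 2)) by (field; lra).
  unfold Rdiv; apply Rmult_le_compat_r; [apply Rlt_le, Rinv_0_lt_compat; auto | lra].
Qed.

Lemma ps_eq0_at_max phi u z t :
  ex_derive (fun x => u x t) z -> (forall x, u x t <= u z t) -> ps phi u z t = 0.
Proof.
  intros Hu Hmax. unfold ps, pz.
  rewrite (Derive_eq0_at_max (fun x => u x t)); auto. apply Rdiv_0_l.
Qed.

Lemma pss_le0_at_max phi u z t :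
  (forall x, ex_derive (fun x => u x t) x) -> ex_derive (fun x => pz u x t) z ->
  ex_derive (fun x => phi x t) z -> 0 < phi z t ->
  (forall x, u x t <= u z t) -> ps phi (ps phi u) z t <= 0.
Proof.
  intros Hu Hu2 Hphi Hphi0 Hmax.
  assert (H0 : pz u z t = 0) by (apply (Derive_eq0_at_max (fun x => u x t)); auto).
  assert (H2 : Derive (fun x => pz u x t) z <= 0)
    by (apply (Derive2_le0_at_max (fun x => u x t)); auto).
  unfold ps at 1, pz at 1, ps.
  rewrite Derive_div by (auto; lra). rewrite H0.
  set (D2 := Derive (fun x => pz u x t) z) in *. set (P := phi z t) in *.
  replace ((D2 * P - 0 * Derive (fun y => phi y t) z) / P ^ 2 / P) with (D2 * (/ P * / P))
    by (field; lra).
  assert (0 < / P) by (apply Rinv_0_lt_compat; lra).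
  assert (0 < / P * / P) by nra. nra.
Qed.

Lemma smooth_upto_ex_derive T f z t :
  smooth_upto T f -> 0 < t < T ->
  (forall x, ex_derive (fun x => f x t) x) /\ ex_derive (fun s => f z s) t /\
  ex_derive (fun x => pz f x t) z.
Proof.
  intros [_ [S [Sf HS]]] Ht.
  destruct (HS f Sf) as [H1 [_ [Sp _]]].
  destruct (HS (pz f) Sp) as [H2 _].
  split; [intro x; apply (H1 x t Ht) | split; [apply (H1 z t Ht) | apply (H2 z t Ht)]].
Qed.

Lemma barrier_touch_impossible T phi u z m L K X :
  smooth_upto T phi -> smooth_upto T u -> 0 < m < T -> 0 < phi z m ->
  (forall x, 0 < u x m) ->
  (forall x, u x m ^ 2 + L * m <= K) -> K <= u z m ^ 2 + L * m ->
  (forall s, 0 <= s < m -> u z s ^ 2 + L * s < K) ->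
  pt u z m <= ps phi (ps phi u) z m + ps phi u z m * X - 2 / u z m ->
  L < 4 -> False.
Proof.
  intros Sphi Su Hm Hphi Hu Hbound Htouch Hbefore Hpde HL.
  destruct (smooth_upto_ex_derive T u z m Su Hm) as [Dz [Dt Dzz]].
  destruct (smooth_upto_ex_derive T phi z m Sphi Hm) as [Pz _].
  assert (Hmax : forall x, u x m <= u z m).
  { intro x. specialize (Hbound x). pose proof (Hu x). pose proof (Hu z). nra. }
  rewrite (ps_eq0_at_max phi u z m (Dz z) Hmax) in Hpde.
  pose proof (pss_le0_at_max phi u z m Dz Dzz (Pz z) Hphi Hmax) as Hss.
  assert (Hut : u z m * pt u z m <= -2).
  { pose proof (Hu z).
    replace (-2) with (u z m * (- 2 / u z m)) by (field; lra).
    apply Rmult_le_compat_l; lra. }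
  pose proof (left_max_sq_add_lin (fun s => u z s) m L m Dt ltac:(lra)) as Hleft.
  assert (- L <= 2 * u z m * pt u z m).
  { apply Hleft. intros s Hs. specialize (Hbefore s ltac:(lra)). lra. }
  lra.
Qed.

Lemma component_touch_impossible T phi u v w z m L K X :
  smooth_upto T phi -> smooth_upto T u -> 0 < m < T -> 0 < phi z m ->
  0 < v z m -> 0 < w z m -> (forall x, 0 < u x m) ->
  (forall x, u x m ^ 2 + L * m <= K) ->
  v z m ^ 2 + L * m <= K -> w z m ^ 2 + L * m <= K -> K <= u z m ^ 2 + L * m ->
  (forall s, 0 <= s < m -> u z s ^ 2 + L * s < K) ->
  pt u z m = ps phi (ps phi u) z m + ps phi u z m * X
     - 2 * (u z m ^ 4 - (v z m ^ 2 - w z m ^ 2) ^ 2) / (u z m * v z m ^ 2 * w z m ^ 2) ->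
  L < 4 -> False.
Proof.
  intros Sphi Su Hm Hphi Hv Hw Hu Hbound Hvle Hwle Htouch Hbefore Hpde HL.
  apply (barrier_touch_impossible T phi u z m L K X); auto.
  pose proof (Hu z).
  assert (v z m <= u z m) by nra. assert (w z m <= u z m) by nra.
  pose proof (ricci_reaction_ge (u z m) (v z m) (w z m) Hv Hw ltac:(lra) ltac:(lra)).
  lra.
Qed.

Lemma periodic2pi_shift f : periodic2pi f ->
  forall n z t, f (z + 2 * PI * IZR n) t = f z t.
Proof.
  intros Hf n. induction n using Z.peano_ind; intros z t.
  - rewrite Rmult_0_r, Rplus_0_r. reflexivity.
  - rewrite succ_IZR.
    replace (z + 2 * PI * (IZR n + 1)) with ((z + 2 * PI * IZR n) + 2 * PI) by ring.
    rewrite Hf. apply IHn.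
  - rewrite <- Z.sub_1_r, minus_IZR, <- (Hf (z + 2 * PI * (IZR n - 1))).
    replace (z + 2 * PI * (IZR n - 1) + 2 * PI) with (z + 2 * PI * IZR n) by ring.
    apply IHn.
Qed.

Lemma shift_into_period z : exists n : Z, 0 <= z + 2 * PI * IZR n <= 2 * PI.
Proof.
  pose proof PI_RGT_0.
  destruct (archimed (z / (2 * PI))) as [H1 H2].
  exists (1 - up (z / (2 * PI)))%Z. rewrite minus_IZR.
  set (q := z / (2 * PI)) in *. set (k := IZR (up q)) in *.
  replace (z + 2 * PI * (1 - k)) with (2 * PI * (q - k + 1)) by (unfold q; field; lra).
  split; [apply Rmult_le_pos |]; nra.
Qed.

Lemma compact_tube (Q : R -> R -> Prop) lo hi t0 :
  (forall z, locally_2d Q z t0) ->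
  exists d : posreal, forall z t, lo <= z <= hi -> Rabs (t - t0) < d -> Q z t.
Proof.
  intros Hloc.
  pose (delta z := proj1_sig (constructive_indefinite_description _ (Hloc z))).
  destruct (compactness_value_1d lo hi delta) as [d Hd].
  exists d. intros z t Hz Ht.
  apply NNPP. intro HnQ. apply (Hd z Hz). intros [z0 [_ [Hzz0 Hdz0]]].
  apply HnQ, (proj2_sig (constructive_indefinite_description _ (Hloc z0))).
  - exact Hzz0.
  - fold (delta z0). lra.
Qed.

Lemma cont_on_sq_add_lin T g L :
  cont_on T g -> cont_on T (fun z t => g z t ^ 2 + L * t).
Proof.
  intros Hg z t Ht.
  set (F := within _ _).
  pose proof (Hg z t Ht) as HG; fold F in HG.
  assert (Hsnd : filterlim snd F (locally t)).
  { apply (filterlim_filter_le_1 _ (filter_le_within _)), continuous_snd. }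
  pose proof (filterlim_comp_2 _ _ mult HG HG (filterlim_mult _ _)) as Hsq.
  pose proof (filterlim_comp_2 _ _ mult (filterlim_const L) Hsnd (filterlim_mult _ _)) as Hlin.
  pose proof (filterlim_comp_2 _ _ plus Hsq Hlin (filterlim_plus _ _)) as Hsum.
  replace (g z t ^ 2 + L * t) with (plus (mult (g z t) (g z t)) (mult L t))
    by (unfold plus, mult; simpl; ring).
  eapply filterlim_ext; [|exact Hsum].
  intros p; unfold plus, mult; simpl; ring.
Qed.

Lemma cont_on_lt_locally T h z t K :
  cont_on T h -> 0 <= t < T -> h z t < K ->
  locally_2d (fun z' t' => 0 <= t' < T -> h z' t' < K) z t.
Proof.
  intros Hc Ht Hlt.
  apply (locally_2d_locally (fun z' t' => 0 <= t' < T -> h z' t' < K)).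
  exact (Hc z t Ht _ (open_lt K _ Hlt)).
Qed.

Lemma real_induction T (P : R -> Prop) :
  (forall t, 0 <= t < T -> (forall s, 0 <= s < t -> P s) -> P t) ->
  (forall t, 0 <= t < T -> P t ->
     exists d, 0 < d /\ forall s, t < s < t + d -> s < T -> P s) ->
  forall t, 0 <= t < T -> P t.
Proof.
  intros Hclosed Hopen t0 Ht0. apply NNPP; intro Hn.
  set (S := fun x => 0 <= x <= t0 /\ forall s, 0 <= s < x -> P s).
  assert (HS0 : S 0) by (split; [lra | intros s Hs; lra]).
  assert (Hbd : bound S) by (exists t0; intros x [Hx _]; lra).
  destruct (completeness S Hbd (ex_intro _ 0 HS0)) as [m [Hub Hlub]].
  assert (Hm0 : 0 <= m) by (apply Hub; auto).
  assert (Hmt : m <= t0) by (apply Hlub; intros x [Hx _]; lra).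
  assert (Hbelow : forall s, 0 <= s < m -> P s).
  { intros s Hs. apply NNPP; intro HnP.
    assert (Hs_ub : is_upper_bound S s).
    { intros x [_ Hx]. apply Rnot_lt_le; intro. apply HnP, Hx. lra. }
    apply Hlub in Hs_ub. lra. }
  assert (Hm : P m) by (apply Hclosed; auto; lra).
  assert (Hmt' : m < t0) by (destruct Hmt as [|Heq]; [auto | subst; contradiction]).
  destruct (Hopen m ltac:(lra) Hm) as [d [Hd Hd_open]].
  set (x := Rmin (m + d / 2) t0).
  assert (Hx1 : x <= m + d / 2) by apply Rmin_l. assert (Hx2 : x <= t0) by apply Rmin_r.
  assert (HSx : S x).
  { split; [split; [apply Rmin_glb; lra | exact Hx2] |].
    intros s Hs. destruct (Rtotal_order s m) as [Hsm | [Hsm | Hsm]].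
    - apply Hbelow; lra.
    - subst; exact Hm.
    - apply Hd_open; lra. }
  assert (x <= m) by (apply Hub; exact HSx).
  assert (x = t0) by (unfold x in *; destruct (Rle_or_lt (m + d / 2) t0);
    [rewrite Rmin_left in *; lra | rewrite Rmin_right; lra]).
  lra.
Qed.

Definition sq_sublevel (L K : R) (u : R -> R -> R) (t : R) : Prop :=
  forall z, u z t ^ 2 + L * t < K.

Definition metric_sublevel (L K : R) (a b c : R -> R -> R) (t : R) : Prop :=
  sq_sublevel L K a t /\ sq_sublevel L K b t /\ sq_sublevel L K c t.

Lemma sq_sublevel_persists T u L K t0 :
  cont_on T u -> periodic2pi u -> 0 <= t0 < T -> sq_sublevel L K u t0 ->
  exists d : posreal, forall t, Rabs (t - t0) < d -> 0 <= t < T -> sq_sublevel L K u t.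
Proof.
  intros Hc Hper Ht0 Hsub.
  destruct (compact_tube (fun z t => 0 <= t < T -> u z t ^ 2 + L * t < K) 0 (2 * PI) t0)
    as [d Hd].
  { intro z. apply (cont_on_lt_locally T (fun z t => u z t ^ 2 + L * t));
      [apply cont_on_sq_add_lin | |]; auto. }
  exists d. intros t Ht HtT z.
  destruct (shift_into_period z) as [n Hn].
  rewrite <- (periodic2pi_shift u Hper n z t). apply Hd; auto.
Qed.

Lemma sq_sublevel_limit T u L K m :
  smooth_upto T u -> 0 < m < T ->
  (forall s, 0 <= s < m -> sq_sublevel L K u s) ->
  forall z, u z m ^ 2 + L * m <= K.
Proof.
  intros Su Hm Hbefore z.
  destruct (smooth_upto_ex_derive T u z m Su Hm) as [_ [Dt _]].
  apply (continuous_le_of_lt_left (fun s => u z s ^ 2 + L * s)); [| lra |].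
  - apply (ex_derive_continuous (K := R_AbsRing) (V := R_NormedModule)).
    auto_derive. exact Dt.
  - intros s Hs. apply Hbefore, Hs.
Qed.

Lemma rf_metric_sublevel_closed T phi a b c L K m :
  RF_solution T phi a b c -> L < 4 -> 0 < m < T ->
  (forall s, 0 <= s < m -> metric_sublevel L K a b c s) -> metric_sublevel L K a b c m.
Proof.
  intros [_ [Sphi [Sa [Sb [Sc [_ [_ [_ [_ [Hpos Heq]]]]]]]]]] HL Hm Hbefore.
  assert (Ha := sq_sublevel_limit T a L K m Sa Hm (fun s Hs => proj1 (Hbefore s Hs))).
  assert (Hb := sq_sublevel_limit T b L K m Sb Hm (fun s Hs => proj1 (proj2 (Hbefore s Hs)))).
  assert (Hc := sq_sublevel_limit T c L K m Sc Hm (fun s Hs => proj2 (proj2 (Hbefore s Hs)))).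
  assert (Hp : forall x, 0 < phi x m /\ 0 < a x m /\ 0 < b x m /\ 0 < c x m)
    by (intro; apply Hpos; lra).
  assert (Htouch : forall z,
    K <= a z m ^ 2 + L * m \/ K <= b z m ^ 2 + L * m \/ K <= c z m ^ 2 + L * m -> False).
  { intros z Hz. destruct (Hp z) as [P0 [P1 [P2 P3]]].
    destruct (Heq z m Hm) as [Ea [Eb [Ec _]]].
    destruct Hz as [H | [H | H]].
    - eapply (component_touch_impossible T phi a b c z m L K _ Sphi Sa Hm); eauto.
      + intro x; apply Hp.
      + intros s Hs. apply (Hbefore s Hs).
    - eapply (component_touch_impossible T phi b a c z m L K _ Sphi Sb Hm); eauto.
      + intro x; apply Hp.
      + intros s Hs. apply (Hbefore s Hs).
      + replace (b z m * a z m ^ 2 * c z m ^ 2) with (a z m ^ 2 * b z m * c z m ^ 2) by ring.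
        exact Eb.
    - eapply (component_touch_impossible T phi c a b z m L K _ Sphi Sc Hm); eauto.
      + intro x; apply Hp.
      + intros s Hs. apply (Hbefore s Hs).
      + replace (c z m * a z m ^ 2 * b z m ^ 2) with (a z m ^ 2 * b z m ^ 2 * c z m) by ring.
        exact Ec. }
  repeat split; intro z; apply Rnot_le_lt; intro H; apply (Htouch z); auto.
Qed.

Lemma rf_metric_sublevel_preserved T phi a b c L K :
  RF_solution T phi a b c -> L < 4 -> metric_sublevel L K a b c 0 ->
  forall t, 0 <= t < T -> metric_sublevel L K a b c t.
Proof.
  intros Hrf HL H0.
  pose proof Hrf as [_ [_ [[Ca _] [[Cb _] [[Cc _] [_ [Pa [Pb [Pc _]]]]]]]]].
  apply real_induction.
  - intros t Ht Hbefore. destruct (Req_dec t 0) as [-> | Ht0]; [exact H0 |].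
    apply (rf_metric_sublevel_closed T phi); auto; lra.
  - intros t Ht [Ha [Hb Hc]].
    destruct (sq_sublevel_persists T a L K t Ca Pa Ht Ha) as [da Hda].
    destruct (sq_sublevel_persists T b L K t Cb Pb Ht Hb) as [db Hdb].
    destruct (sq_sublevel_persists T c L K t Cc Pc Ht Hc) as [dc Hdc].
    exists (Rmin da (Rmin db dc)).
    split; [repeat apply Rmin_glb_lt; apply cond_pos |].
    intros s Hs HsT.
    assert (Hmin := Rmin_l da (Rmin db dc)). assert (Hmin' := Rmin_r da (Rmin db dc)).
    assert (Rmin db dc <= db) by apply Rmin_l. assert (Rmin db dc <= dc) by apply Rmin_r.
    assert (Habs : Rabs (s - t) < Rmin da (Rmin db dc)) by (rewrite Rabs_right; lra).
    split; [apply Hda | split; [apply Hdb | apply Hdc]]; lra.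
Qed.

Lemma rf_existence_time_le T phi a b c C :
  RF_solution T phi a b c ->
  (forall z, a z 0 <= C /\ b z 0 <= C /\ c z 0 <= C) ->
  T <= C ^ 2 / 4.
Proof.
  intros Hrf HC.
  assert (Hpos0 : forall z, 0 < a z 0 /\ 0 < b z 0 /\ 0 < c z 0).
  { intro z. destruct Hrf as [HT [_ [_ [_ [_ [_ [_ [_ [_ [Hp _]]]]]]]]]].
    apply Hp. lra. }
  apply Rnot_lt_le. intro HTb.
  (* pick t1 in (C^2/4, T) and e > 0 with C^2 + e = (4 - e) t1 *)
  set (t1 := (C ^ 2 / 4 + T) / 2).
  set (e := (4 * t1 - C ^ 2) / (t1 + 1)).
  assert (Hc2 : 0 <= C ^ 2) by apply pow2_ge_0.
  assert (Ht1 : 0 < t1 < T) by (unfold t1; lra).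
  assert (He : 0 < e) by (unfold e; apply Rdiv_lt_0_compat; unfold t1; lra).
  assert (Hee : e * (t1 + 1) = 4 * t1 - C ^ 2) by (unfold e; field; lra).
  assert (H0 : metric_sublevel (4 - e) (C ^ 2 + e) a b c 0).
  { repeat split; intro z; destruct (Hpos0 z) as [Pa [Pb Pc]]; destruct (HC z) as [Ca [Cb Cc]];
      nra. }
  destruct (rf_metric_sublevel_preserved T phi a b c (4 - e) (C ^ 2 + e) Hrf ltac:(lra) H0 t1
    ltac:(lra)) as [_ [_ Hc]].
  specialize (Hc 0). pose proof (pow2_ge_0 (c 0 t1)). nra.
Qed.

Theorem corollary4p4 (T : R) (phi a b c : R -> R -> R) (chat0 : R) :
  RF_solution T phi a b c ->
  (forall z, a z 0 <= b z 0 /\ b z 0 <= c z 0) ->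
  (exists z0, c z0 0 = chat0) ->
  (forall z, c z 0 <= chat0) ->
  T <= chat0 ^ 2 / 4.
Proof.
  intros Hrf Hord _ Hmax.
  apply (rf_existence_time_le T phi a b c); auto.
  intro z. destruct (Hord z). pose proof (Hmax z). repeat split; lra.
Qed.
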